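(* Let $\mathcal{A}=\{A_1,\dots,A_m\}$ be a bimodal collection of pairwise disjoint nonempty subsets of a finite abelian group $G$, with internal difference groups $H_1,\dots,H_m$, labelled so that $|A_i|<|H_i|$ exactly for $i=1,\dots,r$, where $r\ge2$. Let $D=(a_1+H_1)\setminus A_1$, where $a_1+H_1$ is the coset of $H_1$ containing $A_1$, and suppose $\mathcal{A}$ is in canonical position, i.e. $D$ is a subgroup of $G$. Then $(H_1+H_2+\dots+H_r)\setminus D\subseteq A_1\cup A_2\cup\dots\cup A_m$.
   Context: $G$ is written additively. The internal difference group $H_i$ of $A_i$ is the subgroup generated by all $x-y$ with $x,y\in A_i$; $A_i$ lies in a single coset of $H_i$ and $|A_i|\le|H_i|$. A collection $\{A_1,\dots,A_m\}$ of pairwise disjoint subsets of $G$ is bimodal if for every $i$ and every $\delta\in G\setminus\{0\}$, the number $N_i(\delta)$ of pairs $(a,b)$ with $a\in A_i$, $b\in A_j$ for some $j\neq i$, and $a-b=\delta$, satisfies $N_i(\delta)\in\{0,|A_i|\}$. (For such collections with $r\ge2$ the set $D$ equals $(a_i+H_i)\setminus A_i$ for every $i\le r$ and is a coset of a subgroup; canonical position means the collection has been translated so that $D$ is a subgroup.) *)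

From mathcomp Require Import all_boot all_order all_algebra.
Set Implicit Arguments. Unset Strict Implicit. Unset Printing Implicit Defensive.
Import GRing.Theory.
Local Open Scope ring_scope.

Section Defs.
Variable G : finZmodType.

Definition is_subgroup (S : {set G}) : bool :=
  (0 \in S) && [forall x in S, forall y in S, x - y \in S].

Definition gen_subgroup (X : {set G}) : {set G} :=
  [set h | [forall S : {set G}, (is_subgroup S && (X \subset S)) ==> (h \in S)]].

Definition diff_group (A : {set G}) : {set G} :=
  gen_subgroup [set x - y | x in A, y in A].

Definition Ncount m (A : 'I_m -> {set G}) (i : 'I_m) (delta : G) : nat :=
  #|[set p : G * G | (p.1 \in A i) && [exists j : 'I_m, (j != i) && (p.2 \in A j)]
                      && (p.1 - p.2 == delta)]|.

Definition pairwise_disjoint m (A : 'I_m -> {set G}) : Prop :=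
  forall i j : 'I_m, i != j -> [disjoint A i & A j].

Definition bimodal m (A : 'I_m -> {set G}) : Prop :=
  pairwise_disjoint A /\
  forall (i : 'I_m) (delta : G), delta != 0 ->
    Ncount A i delta = 0%N \/ Ncount A i delta = #|A i|.

Definition sum_first m (r : nat) (H : 'I_m -> {set G}) : {set G} :=
  [set x | [exists h : {ffun 'I_m -> G},
     [forall i : 'I_m, (i < r)%N ==> (h i \in H i)] &&
     (x == \sum_(i < m | (i < r)%N) h i)]].

Definition coset_of_el (a : G) (H : {set G}) : {set G} := [set a + h | h in H].
End Defs.

From mathcomp Require Import all_boot all_order all_algebra.
Import GRing.Theory.
Local Open Scope ring_scope.
Set Implicit Arguments. Unset Strict Implicit.

(* Call the points outside U = A_1 u ... u A_m holes. Bimodality says exactly that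
   the union of the A_j, j <> i, is invariant under translation by H_i; hence every
   coset of H_i other than a_i + H_i consists either of holes only or of covered
   points only, and a_i + H_i meets U in A_i alone. Canonical position gives 0 in D,
   so A_1 lies in H_1 and 0 is a hole. From this, each A_i with |A_i| < |H_i| lies
   in H_i, and a hole lies in H_i iff it lies in H_1. Therefore the holes outside H_1
   are stable under translation by H_1, ..., H_r: a hole x in H_1 + ... + H_r outside
   H_1 would give the hole x - x = 0 outside H_1. So all holes of H_1 + ... + H_r
   lie in H_1 \ A_1 = D. *)

Section Subgroups.
Variable G : finZmodType.
Implicit Types (S X A : {set G}) (x y : G).

Lemma subgroup0 S : is_subgroup S -> 0 \in S.
Proof. by case/andP. Qed.

Lemma subgroupB S x y : is_subgroup S -> x \in S -> y \in S -> x - y \in S.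
Proof.
by case/andP=> _ /forall_inP subS Sx Sy; move/forall_inP: (subS x Sx); apply.
Qed.

Lemma subgroupN S x : is_subgroup S -> x \in S -> - x \in S.
Proof. by move=> sgS Sx; rewrite -sub0r subgroupB ?subgroup0. Qed.

Lemma subgroupD S x y : is_subgroup S -> x \in S -> y \in S -> x + y \in S.
Proof. by move=> sgS Sx Sy; rewrite -[y]opprK subgroupB ?subgroupN. Qed.

Lemma gen_subgroup_subgroup X : is_subgroup (gen_subgroup X).
Proof.
apply/andP; split.
  by rewrite inE; apply/forall_inP=> S /andP[sgS _]; apply: subgroup0.
apply/forall_inP=> x; rewrite inE => /forall_inP Xx.
apply/forall_inP=> y; rewrite inE => /forall_inP Xy.
rewrite inE; apply/forall_inP=> S XS.
by case/andP: (XS) => sgS _; apply: subgroupB (Xx S XS) (Xy S XS).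
Qed.

Lemma gen_subgroup_min X S x :
  is_subgroup S -> X \subset S -> x \in gen_subgroup X -> x \in S.
Proof. by move=> sgS sXS; rewrite inE => /forall_inP; apply; rewrite sgS. Qed.

Lemma diff_group_subgroup A : is_subgroup (diff_group A).
Proof. exact: gen_subgroup_subgroup. Qed.

Lemma mem_diff_group A x y : x \in A -> y \in A -> x - y \in diff_group A.
Proof.
move=> Ax Ay; rewrite inE; apply/forall_inP=> S /andP[_ /subsetP]; apply.
exact: imset2_f.
Qed.

Lemma diff_group_period A (P : pred G) :
  (forall a a' x, a \in A -> a' \in A -> P x -> P (x + (a' - a))) ->
  forall h x, h \in diff_group A -> P (x + h) = P x.
Proof.
move=> shiftP h x Hh.
suff: h \in [set h | [forall x, P (x + h) == P x]] by rewrite inE => /forallP/(_ x)/eqP.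
apply: gen_subgroup_min Hh.
- apply/andP; split; first by rewrite inE; apply/forallP=> y; rewrite addr0.
  apply/forall_inP=> u; rewrite inE => /forallP Pu.
  apply/forall_inP=> v; rewrite inE => /forallP Pv.
  rewrite inE; apply/forallP=> y.
  by rewrite -(eqP (Pv (y + (u - v)))) -addrA subrK (eqP (Pu y)).
- apply/subsetP=> _ /imset2P[a' a Aa' Aa ->]; rewrite inE; apply/forallP=> y.
  apply/eqP; apply/idP/idP=> [Py'|]; last exact: shiftP.
  by rewrite -[y](addrK (a' - a)) opprB; apply: shiftP.
Qed.

Lemma notin_subgroupD S x y : is_subgroup S -> y \in S -> x \notin S -> x + y \notin S.
Proof. by move=> sgS Sy; apply: contra => Sxy; rewrite -(addrK y x) subgroupB. Qed.

Lemma notin_subgroupB S x y : is_subgroup S -> y \in S -> x \notin S -> x - y \notin S.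
Proof. by move=> sgS Sy; apply: notin_subgroupD (subgroupN sgS Sy). Qed.

Lemma mem_coset_of_el (a : G) H y : (y \in coset_of_el a H) = (y - a \in H).
Proof.
apply/imsetP/idP=> [[h Hh ->]|Hya]; first by rewrite addrC addKr.
by exists (y - a); rewrite // subrKC.
Qed.

Lemma sum_first_translate m r (H : 'I_m -> {set G}) (P : pred G) s x :
  (forall i : 'I_m, (i < r)%N -> is_subgroup (H i)) ->
  (forall (i : 'I_m) h y, (i < r)%N -> h \in H i -> P y -> P (y + h)) ->
  s \in sum_first r H -> P x -> P (x - s).
Proof.
move=> sgH transP; rewrite inE => /existsP[f /andP[/forall_inP Hf /eqP->]].
elim/big_rec: _ x => [|i s' ir IHs x Px]; first by move=> x; rewrite subr0.
rewrite opprD addrA; apply/IHs/(transP i _ _ ir)=> //.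
by rewrite subgroupN ?sgH ?Hf.
Qed.

End Subgroups.

Section Bimodal.
Variables (G : finZmodType) (m : nat) (A : 'I_m -> {set G}).
Local Notation H i := (diff_group (A i)).
Local Notation cover := (\bigcup_(i < m) A i).

Definition others (i : 'I_m) : {set G} := [set x | [exists j, (j != i) && (x \in A j)]].

Lemma NcountE i d :
  Ncount A i d = #|[set p : G * G | [&& p.1 \in A i, p.2 \in others i & p.1 - p.2 == d]]|.
Proof. by apply: eq_card=> p; rewrite !inE andbA. Qed.

Lemma Ncount_neq0 i a b : a \in A i -> b \in others i -> Ncount A i (a - b) != 0%N.
Proof.
move=> Aa Ob; rewrite NcountE -lt0n; apply/card_gt0P.
by exists (a, b); rewrite inE /= Aa Ob eqxx.
Qed.

Lemma Ncount_eq_card i d a :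
  Ncount A i d = #|A i| -> a \in A i -> a - d \in others i.
Proof.
rewrite NcountE; set S := [set p | _] => cardS Aa.
have fst_inj : {in S &, injective fst}.
  move=> [p1 p2] [q1 q2]; rewrite !inE /= => /and3P[_ _ /eqP dp] /and3P[_ _ /eqP dq] eq1.
  by rewrite -eq1 in dq *; rewrite -[p2](subKr p1) -[q2](subKr p1) dp dq.
have fstS : [set p.1 | p in S] = A i.
  apply/eqP; rewrite eqEcard card_in_imset // cardS leqnn andbT.
  by apply/subsetP=> y /imsetP[p]; rewrite inE => /and3P[Ap _ _] ->.
move: Aa; rewrite -fstS => /imsetP[[p1 p2]]; rewrite inE /= => /and3P[_ Op2 /eqP dp] ->.
by rewrite -dp subKr.
Qed.

Lemma mem_others i j x : j != i -> x \in A j -> x \in others i.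
Proof. by move=> ji Ajx; rewrite inE; apply/existsP; exists j; rewrite ji. Qed.

Lemma coverE i : cover = A i :|: others i.
Proof.
apply/setP=> x; rewrite in_setU.
apply/bigcupP/orP=> [[j _ Ajx] | [Aix | ]].
- by case: (eqVneq j i)=> [<- | ji]; [left | right; apply: mem_others Ajx].
- by exists i.
- by rewrite inE => /existsP[j /andP[_ Ajx]]; exists j.
Qed.

Hypothesis bimodalA : bimodal A.

Lemma disjoint_others i : [disjoint A i & others i].
Proof.
apply/pred0P=> x /=; rewrite !inE; apply/andP=> -[Aix /existsP[j /andP[ji Ajx]]].
have := disjointFr (bimodalA.1 _ _ ji) Ajx.
by rewrite Aix.
Qed.

(* N_i(a - x) <> 0 forces N_i(a - x) = |A_i|: every a' in A_i has a partner a' - (a - x). *)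
Lemma others_shift i a a' x :
  a \in A i -> a' \in A i -> x \in others i -> x + (a' - a) \in others i.
Proof.
move=> Aa Aa' Ox.
have nz : a - x != 0.
  rewrite subr_eq0; apply: contraTneq Ox => <-.
  by rewrite (disjointFr (disjoint_others i) Aa).
case: (bimodalA.2 i _ nz) => [N0 | Nfull]; first by move: (Ncount_neq0 Aa Ox); rewrite N0.
by move: (Ncount_eq_card Nfull Aa'); rewrite opprB addrCA.
Qed.

Lemma others_period i h x : h \in H i -> (x + h \in others i) = (x \in others i).
Proof. exact: diff_group_period (@others_shift i) h x. Qed.

Lemma others_translate i u h : u \in others i -> h \in H i -> u + h \in cover.
Proof. by move=> Ou Hh; rewrite (coverE i) in_setU others_period ?Ou ?orbT. Qed.

Lemma coset_cover i a y : a \in A i -> y - a \in H i -> y \in cover -> y \in A i.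
Proof.
rewrite (coverE i) in_setU => Aa Hya /orP[// | Oy].
have: a \in others i.
  by rewrite -(subrKC y a) others_period // -opprB subgroupN ?diff_group_subgroup.
by rewrite (disjointFr (disjoint_others i) Aa).
Qed.

Lemma cover_translate i a x h :
  a \in A i -> x - a \notin H i -> h \in H i -> (x + h \in cover) = (x \in cover).
Proof.
move=> Aa nHxa Hh.
have notA y : y - a \notin H i -> y \notin A i by apply: contra => Ay; apply: mem_diff_group.
have nHxha : x + h - a \notin H i.
  by rewrite addrAC notin_subgroupD ?diff_group_subgroup.
by rewrite !(coverE i) !in_setU others_period // !(negbTE (notA _ _)).
Qed.

Lemma coset_hole i a :
  (#|A i| < #|H i|)%N -> a \in A i -> exists2 t, t - a \in H i & t \notin cover.
Proof.
move=> ltAH Aa; have : ~~ (coset_of_el a (H i) \subset A i).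
  apply: contraL ltAH => /subset_leq_card; rewrite -leqNgt card_imset //.
  exact: addrI.
case/subsetPn=> t; rewrite mem_coset_of_el => Hta At; exists t => //.
by apply: contra At; apply: coset_cover Aa Hta.
Qed.

Variables (i0 : 'I_m) (a1 : G).
Hypotheses (A_a1 : a1 \in A i0) (H_a1 : a1 \in H i0) (A0_0 : 0 \notin A i0).
Local Notation H0 := (H i0).

Lemma H0_translate x h : x \notin H0 -> h \in H0 -> (x + h \in cover) = (x \in cover).
Proof.
by move=> nH0x; apply: cover_translate A_a1 _; rewrite notin_subgroupB ?diff_group_subgroup.
Qed.

Lemma zero_notin_cover : 0 \notin cover.
Proof.
apply: contra A0_0; apply: coset_cover A_a1 _.
by rewrite sub0r subgroupN ?diff_group_subgroup.
Qed.

Lemma others_notin_H0 u : u \in others i0 -> u \notin H0.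
Proof.
move=> Ou; apply: contraTN (Ou) => H0u.
have Cu : u \in cover by rewrite (coverE i0) in_setU Ou orbT.
have A0u := coset_cover A_a1 (subgroupB (diff_group_subgroup _) H0u H_a1) Cu.
by rewrite (disjointFr (disjoint_others i0) A0u).
Qed.

Lemma hole_in_H0 i x : x \notin cover -> x \in H i -> x \in H0.
Proof.
move=> Cx Hx; case: (eqVneq i i0) => [<- // | ii0].
apply: contraNT Cx => nH0x; rewrite -(H0_translate nH0x H_a1) addrC.
by apply: others_translate Hx; apply: mem_others A_a1; rewrite eq_sym.
Qed.

Lemma diff_group_holes i a h : a \in A i -> a \notin H i -> h \in H i -> h \notin cover.
Proof.
move=> Aa nHa Hh; rewrite -[h]add0r (cover_translate Aa _ Hh) ?zero_notin_cover // sub0r.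
by apply: contra nHa => /(subgroupN (diff_group_subgroup _)); rewrite opprK.
Qed.

Lemma A_sub_diff_group i : (#|A i| < #|H i|)%N -> A i \subset H i.
Proof.
move=> ltAH; apply/subsetP=> a; case: (eqVneq i i0) => [-> A0a | ii0 Aa].
  by rewrite -(subrK a1 a) subgroupD ?diff_group_subgroup ?mem_diff_group.
(* Otherwise H_i consists of holes, and a hole t in a + H_i is off H_1 (else a would be
   a hole), so t + a1 is a hole off a + H_i whose translate by a - t is a + a1 in U. *)
apply: contraT => nHa.
have sgH := diff_group_subgroup (A i).
have H_holes := diff_group_holes Aa nHa.
have Ca : a \in cover by apply/bigcupP; exists i.
have O0a : a \in others i0 by apply: mem_others ii0 Aa.
have [t Hta Ct] := coset_hole ltAH Aa.
have Hat : a - t \in H i by rewrite -opprB subgroupN.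
have nH0t : t \notin H0.
  apply: contraT => /negPn H0t.
  have nH0at : a - t \notin H0.
    apply: contra (others_notin_H0 O0a) => H0at.
    by rewrite -(subrK t a) subgroupD ?diff_group_subgroup.
  by move: (H0_translate nH0at H0t); rewrite subrK Ca (negbTE (H_holes _ Hat)).
have Cta1 : t + a1 \notin cover by rewrite H0_translate.
have nHta1 : t + a1 - a \notin H i.
  have nHa1 : a1 \notin H i by apply: contraL (H_holes a1) _; apply/bigcupP; exists i0.
  apply: contra nHa1 => Hta1; have <- : t + a1 - a - (t - a) = a1.
    by rewrite opprB addrA subrK addrC addKr.
  exact: subgroupB.
have := others_translate O0a H_a1.
have -> : a + a1 = t + a1 + (a - t) by rewrite addrAC subrKC.
by rewrite (cover_translate Aa nHta1 Hat) (negbTE Cta1).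
Qed.

Lemma H0_hole_in_H i a x :
  a \in A i -> a \in H i -> x \notin cover -> x \in H0 -> x \in H i.
Proof.
move=> Aa Ha Cx H0x; case: (eqVneq i i0) => [-> // | ii0].
apply: contraNT Cx => nHx.
have nHxa : x - a \notin H i by rewrite notin_subgroupB ?diff_group_subgroup.
rewrite -(cover_translate Aa nHxa Ha) addrC.
by apply: others_translate H0x; apply: mem_others ii0 Aa.
Qed.

Lemma outer_hole_translate i a x h :
  a \in A i -> a \in H i -> x \notin cover -> x \notin H0 -> h \in H i ->
  (x + h \notin cover) && (x + h \notin H0).
Proof.
move=> Aa Ha Cx nH0x Hh.
have nHx : x \notin H i by apply: contra nH0x; apply: hole_in_H0.
have Cxh : x + h \notin cover.
  by rewrite (cover_translate Aa _ Hh) // notin_subgroupB ?diff_group_subgroup.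
rewrite Cxh; apply: contra nHx => H0xh.
by rewrite -(addrK h x) subgroupB ?diff_group_subgroup ?(H0_hole_in_H Aa Ha Cxh).
Qed.

Lemma sum_first_hole_in_H0 r x :
  (forall i : 'I_m, A i != set0) ->
  (forall i : 'I_m, (i < r)%N -> (#|A i| < #|H i|)%N) ->
  x \in sum_first r (fun i => H i) -> x \notin cover -> x \in H0.
Proof.
move=> nzA ltAH sum_x Cx; apply: contraT => nH0x.
have translate (i : 'I_m) h y : (i < r)%N -> h \in H i ->
    (y \notin cover) && (y \notin H0) -> (y + h \notin cover) && (y + h \notin H0).
  move=> ir Hh /andP[Cy nH0y]; have /set0Pn[a Aa] := nzA i.
  exact: outer_hole_translate Aa (subsetP (A_sub_diff_group (ltAH i ir)) a Aa) Cy nH0y Hh.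
have := sum_first_translate (P := [pred y | (y \notin cover) && (y \notin H0)])
  (fun i _ => diff_group_subgroup (A i)) translate sum_x.
by move=> /(_ x); rewrite /= Cx nH0x subrr (subgroup0 (diff_group_subgroup _)) andbF; apply.
Qed.

End Bimodal.

Theorem proposition3p7 (G : finZmodType) (m r : nat) (A : 'I_m -> {set G})
  (i0 : 'I_m) (a1 : G) :
  bimodal A ->
  (forall i : 'I_m, A i != set0) ->
  (2 <= r)%N -> (r <= m)%N ->
  (forall i : 'I_m, (#|A i| < #|diff_group (A i)|)%N = (i < r)%N) ->
  nat_of_ord i0 = 0%N ->
  a1 \in A i0 ->
  is_subgroup (coset_of_el a1 (diff_group (A i0)) :\: A i0) ->
  sum_first r (fun i => diff_group (A i)) :\: (coset_of_el a1 (diff_group (A i0)) :\: A i0)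
    \subset \bigcup_(i < m) A i.
Proof.
move=> bimodalA nzA _ _ ltAH _ A_a1 sgD.
have := subgroup0 sgD; rewrite in_setD mem_coset_of_el sub0r => /andP[A0_0 H_Na1].
have H_a1 : a1 \in diff_group (A i0) by rewrite -[a1]opprK subgroupN ?diff_group_subgroup.
apply/subsetP=> x; rewrite in_setD => /andP[nDx sum_x]; apply: contraR nDx => Cx.
have ltAH_r (i : 'I_m) : (i < r)%N -> (#|A i| < #|diff_group (A i)|)%N by rewrite ltAH.
have H0x := sum_first_hole_in_H0 bimodalA A_a1 H_a1 A0_0 nzA ltAH_r sum_x Cx.
have A0x : x \notin A i0 by apply: contra Cx => A0x; apply/bigcupP; exists i0.
by rewrite in_setD mem_coset_of_el A0x subgroupB ?diff_group_subgroup.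
Qed.
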